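(* Consider two instances of the baseline diffusion model that differ only in the new product. In the first, $v_{Hi}=v_H$ for all $i$ and the similarity is $s_p$; in the second, $v'_{Hi}=v'_H$ for all $i$ and the similarity is $s'_p$. Assume $(v'_H-v_H)(s'_p-s_p)<0$ and $\underline H_2<\underline H'_2$, where $\underline H_2$ and $\underline H'_2$ are defined in the context. Let $D_n^t$ and $D_n'^t$ be the corresponding sets of new-product consumers. Then: 1. If $s_p>s'_p$, then $D_n'^t\subseteq D_n^t$ for all $t\ge2$. 2. If $s_p<s'_p$, then one of the following holds: (a) $D_n'^t\subseteq D_n^t$ for all $t\ge2$; (b) there exists $\tilde t\ge2$ such that $D_n'^t\subseteq D_n^t$ for all $2\le t\le\tilde t$, and $D_n^t\subseteq D_n'^t$ for all $t>\tilde t$.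
   Context: Baseline diffusion model. There are $N\ge 2$ individuals partitioned into $G\ge 2$ nonempty groups $N_1,\dots,N_G$ (also denoting cardinalities). Members of $N_k$ have aspiration level $H_{N_k}$, with $H_{N_1}>\cdots>H_{N_G}$; write $H_i$ for individual $i$'s level. The incumbent product $p_c$ gives every individual the payoff $v_L$, where $H_{N_2}<v_L<H_{N_1}$. The new product $p_n$ gives individual $i$ the payoff $v_{Hi}\ge H_{N_1}$. Product similarities are $s_{p_c,p_c}=s_{p_n,p_n}=1$, $s_{p_n,p_c}=s_p\in(0,1)$ and $s_{p_c,p_n}=0$. Individual similarities are $s_{i,i}=1$ and $s_{i,j}=s\in(0,1]$ for $i\neq j$. Dynamics. In period $0$ everyone consumes $p_c$ ($D_c^0=\{1,\dots,N\}$, $D_n^0=\emptyset$). For $t\ge1$, $U_i^t(p_c)=\sum_{t'=0}^{t-1}\sum_{j\in D_c^{t'}}s_{i,j}(v_L-H_i)$ and $U_i^t(p_n)=s_pU_i^t(p_c)+\sum_{t'=0}^{t-1}\sum_{j\in D_n^{t'}}s_{i,j}(v_{Hj}-H_i)$. Individual $i\in D_n^t$ iff $U_i^t(p_n)>U_i^t(p_c)$; otherwise $i\in D_c^t$. Period-2 thresholds. Let $\lambda_1=\frac{s(2N-N_1-2)+2}{sN_1}$ (this is the same in both instances). Define $\mathscr F(H)=\frac{v_H-H}{(1-s_p)(v_L-H)}$ for $H<v_L$; it is strictly increasing, with range $(\frac{1}{1-s_p},\infty)$. Let $\underline H_2$ be the unique $H<v_L$ with $\mathscr F(H)=\lambda_1$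 if $\lambda_1>\frac1{1-s_p}$, and $\underline H_2=-\infty$ otherwise. Define $\underline H'_2$ analogously with $v'_H,s'_p$ in place of $v_H,s_p$. (With these definitions, $D_n^2=\{i:H_i>\underline H_2\}$ and $D_n'^2=\{i:H_i>\underline H'_2\}$.) *)

From mathcomp Require Import all_boot all_order all_algebra.
Set Implicit Arguments. Unset Strict Implicit. Unset Printing Implicit Defensive.
Import Order.TTheory GRing.Theory Num.Theory.
Local Open Scope ring_scope.

Section Diffusion.
Variables (R : realFieldType) (N : nat).
(* Hi : aspiration level of individual i; s : similarity between distinct
   individuals; vL : incumbent payoff; vH j : new-product payoff of j;
   sp : similarity s_{p_n,p_c}. *)
Variables (Hi : 'I_N -> R) (s vL : R) (vH : 'I_N -> R) (sp : R).

Definition sim (i j : 'I_N) : R := if i == j then 1 else s.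

(* A history is the list [:: D_n^0; ...; D_n^{t-1}]; D_c^{t'} = ~: D_n^{t'}. *)
Definition Uc (h : seq {set 'I_N}) (i : 'I_N) : R :=
  \sum_(D <- h) \sum_(j in ~: D) sim i j * (vL - Hi i).

Definition Un (h : seq {set 'I_N}) (i : 'I_N) : R :=
  sp * Uc h i + \sum_(D <- h) \sum_(j in D) sim i j * (vH j - Hi i).

Definition next_Dn (h : seq {set 'I_N}) : {set 'I_N} :=
  [set i | Uc h i < Un h i].

Fixpoint hist (t : nat) : seq {set 'I_N} :=
  match t with
  | 0 => [:: set0]
  | t'.+1 => rcons (hist t') (next_Dn (hist t'))
  end.

Definition Dn (t : nat) : {set 'I_N} := last set0 (hist t).
End Diffusion.

(* Thresholds: None stands for -infinity. *)
Definition lambda1 (R : realFieldType) (N N1 : nat) (s : R) : R :=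
  (s * ((2 * N)%:R - N1%:R - 2) + 2) / (s * N1%:R).

Definition scrF (R : realFieldType) (vH sp vL H : R) : R :=
  (vH - H) / ((1 - sp) * (vL - H)).

Definition is_lowerH2 (R : realFieldType) (lam vH sp vL : R) (x : option R) : Prop :=
  if 1 / (1 - sp) < lam then
    exists H, x = Some H /\ H < vL /\ scrF vH sp vL H = lam
  else x = None.

Definition thr_lt (R : realFieldType) (a b : option R) : Prop :=
  match a, b with
  | None, Some _ => True
  | Some x, Some y => x < y
  | _, _ => False
  end.

(* For an individual below [vL], adoption in a period t >= 2 obeys a threshold rule:
   i adopts iff r_t < F(H_i), where r_t = M t / X_t - 1, M = s N + 1 - s is the total
   similarity of an individual to everybody and X_t = s \sum_(k < t) |D_n^k|; r_2 is the
   paper's lambda_1. The sets D_n^t grow with t, so t / X_t decreases.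
   F - F' has the sign of an affine function of H of slope s'_p - s_p, which is positive at
   \underline H_2 since F'(\underline H_2) < F'(\underline H'_2) = F(\underline H_2).
   If s'_p < s_p, then F' < F below \underline H_2, and an induction on t gives D' within D:
   a larger D means a larger X and hence a smaller r. If s_p < s'_p, then F' - F decreases
   in H. At the first period t_0 where D' escapes D, a witness g has
   F'(H_g) - F(H_g) > r'_(t_0) - r_(t_0), and from then on the gap r'_t - r_t only shrinks,
   which keeps every individual of D inside D'. *)

From mathcomp Require Import all_boot all_order all_algebra.
From mathcomp Require Import ring lra.
From Stdlib Require Import Classical.
Import Order.TTheory GRing.Theory Num.Theory.
Local Open Scope ring_scope.
Set Implicit Arguments. Unset Strict Implicit. Unset Printing Implicit Defensive.

Lemma sumr_gt0_recr (R : realDomainType) (f : nat -> R) n :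
  (forall k, (k < n)%N -> f k <= f n) ->
  0 < \sum_(k < n) f k -> 0 < \sum_(k < n.+1) f k.
Proof.
move=> f_le sum_gt0; rewrite big_ord_recr /=; apply: addr_gt0 => //.
rewrite ltNge; apply: contraTN sum_gt0 => fn_le0; rewrite -leNgt.
apply: (@le_trans _ _ (\sum_(k < n) f n)); first by apply: ler_sum => k _; apply: f_le.
by rewrite sumr_const card_ord mulrn_wle0.
Qed.

Lemma div_gap_le (R : realFieldType) (t t0 X X' X0 X0' : R) :
  0 < t0 -> t0 <= t -> 0 < X -> 0 < X' -> 0 < X0 -> 0 < X0' ->
  t / X <= t0 / X0 -> t / X' <= t0 / X0' -> X0' <= X0 -> X - X' <= X0 - X0' ->
  t / X' - t / X <= t0 / X0' - t0 / X0.
Proof.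
move=> t0_gt0 t0_le X_gt0 X'_gt0 X0_gt0 X0'_gt0 q_le q'_le X0'_le gap_le.
have t_gt0 : 0 < t by apply: lt_le_trans t0_le.
have gapE (u Y Y' : R) : 0 < u -> 0 < Y -> 0 < Y' ->
    u / Y' - u / Y = (Y - Y') / u * (u / Y) * (u / Y').
  by move=> u_gt0 Y_gt0 Y'_gt0; field; rewrite !lt0r_neq0.
rewrite gapE // [in leRHS]gapE //.
have q_ge0 (u Y : R) : 0 < u -> 0 < Y -> 0 <= u / Y by move=> *; rewrite divr_ge0 ?ltW.
case: (leP (X - X') 0) => [gap_le0|gap_gt0].
  apply: (@le_trans _ _ 0).
    rewrite -mulrA; apply: mulr_le0_ge0; first by rewrite pmulr_lle0 ?invr_gt0.
    by rewrite mulr_ge0 ?q_ge0.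
  by rewrite !mulr_ge0 ?q_ge0 ?invr_ge0 ?subr_ge0 // ltW.
have d_ge0 : 0 <= (X - X') / t by rewrite divr_ge0 ?ltW.
have q_t_ge0 := q_ge0 _ _ t_gt0 X_gt0.
apply: ler_pM; [exact: mulr_ge0 | exact: q_ge0 | | exact: q'_le].
apply: ler_pM; [by [] | by [] | | exact: q_le].
apply: (@le_trans _ _ ((X0 - X0') / t)); first by rewrite ler_pM2r ?invr_gt0.
by apply: ler_wpM2l; rewrite ?subr_ge0 // lef_pV2 ?posrE.
Qed.

Section Attractiveness.
Variables (R : realFieldType) (vL : R).

Lemma scrF_lt vH sp H1 H2 : sp < 1 -> vL < vH -> H1 < H2 -> H2 < vL ->
  scrF vH sp vL H1 < scrF vH sp vL H2.
Proof.
move=> sp_lt1 vL_lt H12 H2_lt; have H1_lt := lt_trans H12 H2_lt.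
rewrite /scrF ltr_pdivrMr ?mulr_gt0 ?subr_gt0 // mulrAC ltr_pdivlMr ?mulr_gt0 ?subr_gt0 //.
have : 0 < (1 - sp) * ((H2 - H1) * (vH - vL)) by rewrite !mulr_gt0 ?subr_gt0.
by move=> pos; nra.
Qed.

Lemma scrF_lt_mono vH sp H1 H2 : sp < 1 -> vL < vH -> H1 < vL -> H2 < vL ->
  (scrF vH sp vL H1 < scrF vH sp vL H2) = (H1 < H2).
Proof.
move=> sp_lt1 vL_lt H1_lt H2_lt; case: (ltgtP H1 H2) => [H12|H21|->]; last exact: ltxx.
  exact: scrF_lt.
by apply/negbTE; rewrite -leNgt ltW // scrF_lt.
Qed.

Lemma scrF_le_mono vH sp H1 H2 : sp < 1 -> vL < vH -> H1 < vL -> H2 < vL ->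
  (scrF vH sp vL H1 <= scrF vH sp vL H2) = (H1 <= H2).
Proof. by move=> *; rewrite !leNgt scrF_lt_mono. Qed.

Lemma scrF_gt vH sp H : sp < 1 -> vL < vH -> H < vL -> 1 / (1 - sp) < scrF vH sp vL H.
Proof.
move=> sp_lt1 vL_lt H_lt; have sp_gt : 0 < 1 - sp by rewrite subr_gt0.
rewrite /scrF ltr_pdivrMr // mulrAC ltr_pdivlMr ?mulr_gt0 ?subr_gt0 //.
have : 0 < (1 - sp) * (vH - vL) by rewrite mulr_gt0 ?subr_gt0.
by move=> pos; nra.
Qed.

Lemma scrF_subE vH sp vH' sp' H : sp < 1 -> sp' < 1 -> H < vL ->
  scrF vH sp vL H - scrF vH' sp' vL H =
  ((vH - H) * (1 - sp') - (vH' - H) * (1 - sp)) / ((1 - sp) * (1 - sp') * (vL - H)).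
Proof. by move=> sp_lt1 sp'_lt1 H_lt; rewrite /scrF; field; rewrite !lt0r_neq0 ?subr_gt0. Qed.

Lemma scrF_ltP vH sp vH' sp' H : sp < 1 -> sp' < 1 -> H < vL ->
  (scrF vH' sp' vL H < scrF vH sp vL H) =
  (0 < (vH - H) * (1 - sp') - (vH' - H) * (1 - sp)).
Proof.
move=> sp_lt1 sp'_lt1 H_lt.
by rewrite -subr_gt0 scrF_subE // pmulr_lgt0 // invr_gt0 !mulr_gt0 ?subr_gt0.
Qed.

Lemma scrF_sub_lt vH sp vH' sp' H1 H2 : sp < 1 -> sp' < 1 ->
  0 < (vH - vL) * (1 - sp') - (vH' - vL) * (1 - sp) -> H1 < H2 -> H2 < vL ->
  scrF vH' sp' vL H2 - scrF vH sp vL H2 < scrF vH' sp' vL H1 - scrF vH sp vL H1.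
Proof.
move=> sp_lt1 sp'_lt1 adv_gt0 H12 H2_lt; have H1_lt := lt_trans H12 H2_lt.
have c_gt0 : 0 < (1 - sp) * (1 - sp') by rewrite mulr_gt0 ?subr_gt0.
have subE H : H < vL -> scrF vH sp vL H - scrF vH' sp' vL H =
    (((vH - vL) * (1 - sp') - (vH' - vL) * (1 - sp)) / (vL - H) - (sp' - sp)) /
    ((1 - sp) * (1 - sp')).
  by move=> H_lt; rewrite scrF_subE //; field; rewrite !lt0r_neq0 ?subr_gt0.
suff : scrF vH sp vL H1 - scrF vH' sp' vL H1 < scrF vH sp vL H2 - scrF vH' sp' vL H2 by lra.
rewrite !subE // ltr_pM2r ?invr_gt0 // ltrD2r ltr_pM2l //.
by rewrite ltf_pV2 ?posrE ?subr_gt0 // ltrD2l ltrN2.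
Qed.
End Attractiveness.

Section Diffusion.
Variables (R : realFieldType) (N : nat) (Hi : 'I_N -> R) (s vL : R).
Hypotheses (s_gt0 : 0 < s) (s_le1 : s <= 1) (high_exists : exists i, vL < Hi i).

Definition mass : R := s * N%:R + (1 - s).

Definition simD (i : 'I_N) (E : {set 'I_N}) : R := \sum_(j in E) sim s i j.

Lemma mass_gt0 : 0 < mass.
Proof.
have [i _] := high_exists.
have N_ge1 : 1 <= N%:R :> R by rewrite ler1n (leq_trans _ (ltn_ord i)).
have : s * 1 <= s * N%:R by rewrite ler_pM2l.
by rewrite /mass; lra.
Qed.

Lemma simD_card i E : simD i E = s * #|E|%:R + (1 - s) * (i \in E)%:R.
Proof.
rewrite /simD; case: (boolP (i \in E)) => iE.
  rewrite (big_setD1 i iE) /= /sim eqxx (cardsD1 i E) iE add1n (eq_bigr (fun=> s)).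
    by rewrite sumr_const -[s *+ _]mulr_natr -add1n natrD; ring.
  by move=> j; rewrite !inE => /andP[/negbTE ji _]; rewrite eq_sym ji.
rewrite (eq_bigr (fun=> s)); first by rewrite sumr_const -[s *+ _]mulr_natr mulr0 addr0.
by move=> j jE; rewrite /sim; case: eqP => // ij; rewrite ij jE in iE.
Qed.

Lemma simD_ge0 i E : 0 <= simD i E.
Proof. by rewrite simD_card addr_ge0 ?mulr_ge0 ?subr_ge0 // ltW. Qed.

Lemma simD_le_mass i E : simD i E <= mass.
Proof.
rewrite simD_card /mass lerD //.
  by rewrite ler_pM2l // ler_nat (leq_trans (max_card _)) ?card_ord.
by rewrite ler_piMr ?subr_ge0 // lern1 leq_b1.
Qed.

Lemma simD_subset i (E E' : {set 'I_N}) : E \subset E' -> simD i E <= simD i E'.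
Proof.
move=> sub; rewrite !simD_card lerD //.
  by rewrite ler_pM2l // ler_nat subset_leq_card.
apply: ler_wpM2l; first by rewrite subr_ge0.
by rewrite ler_nat; case: (boolP (i \in E)) => // /(subsetP sub) ->.
Qed.

Lemma simD_setC i E : simD i (~: E) = mass - simD i E.
Proof.
have card_setC : #|~: E|%:R = N%:R - #|E|%:R :> R.
  have := cardsC E; rewrite card_ord => cardE.
  by apply/eqP; rewrite eq_sym subr_eq -natrD addnC cardE.
by rewrite !simD_card /mass inE card_setC; case: (i \in E) => /=; ring.
Qed.

Definition well_posed (vH sp : R) :=
  [/\ sp < 1, vL < vH & forall i, Hi i < vL \/ vL < Hi i <= vH].

Section Model.
Variables (vH sp : R).
Hypothesis model : well_posed vH sp.

Let sp_lt1 : sp < 1. Proof. by case: model. Qed.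
Let vL_lt_vH : vL < vH. Proof. by case: model. Qed.
Let sp_gap_gt0 : 0 < 1 - sp. Proof. by rewrite subr_gt0. Qed.

Local Notation history := (hist Hi s vL (fun=> vH) sp).
Local Notation D := (Dn Hi s vL (fun=> vH) sp).
Local Notation F := (scrF vH sp vL).

Lemma Hi_lt_or_gt_vL i : Hi i < vL \/ vL < Hi i.
Proof. by case: model => _ _ /(_ i) [|/andP[]]; [left|right]. Qed.

(* [gain i (D_n^k)] is the contribution of period [k] to [U_i(p_n) - U_i(p_c)]. *)
Definition gain (i : 'I_N) (E : {set 'I_N}) : R :=
  (vH - Hi i) * simD i E - (1 - sp) * (vL - Hi i) * (mass - simD i E).

Lemma Dn0 : D 0 = set0.
Proof. by []. Qed.

Lemma Dn_succ t : D t.+1 = next_Dn Hi s vL (fun=> vH) sp (history t).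
Proof. by rewrite /Dn /= last_rcons. Qed.

Lemma sum_history (f : {set 'I_N} -> R) t :
  \sum_(E <- history t) f E = \sum_(k < t.+1) f (D k).
Proof.
elim: t => [|t IH]; first by rewrite big_seq1 big_ord1.
by rewrite /= -cats1 big_cat big_seq1 IH [RHS]big_ord_recr /= Dn_succ.
Qed.

Lemma in_Dn_succ t i : (i \in D t.+1) = (0 < \sum_(k < t.+1) gain i (D k)).
Proof.
have UcE : Uc Hi s vL (history t) i = \sum_(E <- history t) (mass - simD i E) * (vL - Hi i).
  by apply: eq_bigr => E _; rewrite -mulr_suml -/(simD i (~: E)) simD_setC.
have UnE : \sum_(E <- history t) \sum_(j in E) sim s i j * ((fun=> vH) j - Hi i) =
    \sum_(E <- history t) (vH - Hi i) * simD i E.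
  by apply: eq_bigr => E _; rewrite -mulr_suml mulrC.
rewrite Dn_succ inE /Un UnE UcE -subr_gt0 -sum_history sumrB -!mulr_sumr -!mulr_suml.
by congr (0 < _); ring.
Qed.

Lemma gain_set0 i : gain i set0 = (1 - sp) * (Hi i - vL) * mass.
Proof. by rewrite /gain /simD big_set0; ring. Qed.

Lemma high_in_Dn t i : (0 < t)%N -> vL < Hi i -> i \in D t.
Proof.
case: t => // t _ high.
have Hi_le : Hi i <= vH.
  by case: model => _ _ /(_ i) [/(lt_trans high)|/andP[]//]; rewrite ltxx.
rewrite in_Dn_succ big_ord_recl Dn0 gain_set0 ltr_pwDl ?mulr_gt0 ?subr_gt0 ?mass_gt0 //.
apply: sumr_ge0 => k _; rewrite /gain subr_ge0.
apply: (@le_trans _ _ 0); last by rewrite mulr_ge0 ?subr_ge0 ?simD_ge0.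
rewrite mulr_le0_ge0 ?subr_ge0 ?simD_le_mass // mulr_ge0_le0 ?subr_le0 ?ltW //.
Qed.

Lemma gainE i E : gain i E =
  ((vH - Hi i) + (1 - sp) * (vL - Hi i)) * simD i E - (1 - sp) * (vL - Hi i) * mass.
Proof. by rewrite /gain; ring. Qed.

Lemma gain_subset i (E E' : {set 'I_N}) : Hi i < vL -> E \subset E' -> gain i E <= gain i E'.
Proof.
move=> low sub; rewrite !gainE lerB // ler_wpM2l ?simD_subset //.
by rewrite addr_ge0 ?mulr_ge0 ?subr_ge0 // ltW // (lt_trans low).
Qed.

Lemma Dn_sub k n : (k <= n)%N -> D k \subset D n.
Proof.
elim: n k => [|n IH] k; first by rewrite leqn0 => /eqP->.
rewrite leq_eqVlt => /orP[/eqP->//|]; rewrite ltnS => kn.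
apply: subset_trans (IH _ kn) _; case: n IH {kn} => [|n] IH; first by rewrite Dn0 sub0set.
apply/subsetP => i; case: (Hi_lt_or_gt_vL i) => [low|high _]; last exact: high_in_Dn.
rewrite !in_Dn_succ => pos; apply: (@sumr_gt0_recr _ (fun m => gain i (D m)) _ _ pos) => m mn.
by apply: gain_subset => //; apply: IH; apply: ltnW.
Qed.

Lemma Dn1 : D 1 = [set i | vL < Hi i].
Proof.
apply/setP => i; rewrite in_Dn_succ inE big_ord1 Dn0 gain_set0.
by rewrite pmulr_lgt0 ?mass_gt0 // pmulr_rgt0 // subr_gt0.
Qed.

(* The self-similarity term [(1 - s) [i \in E]] of [simD i E] can be dropped: once [i]
   has adopted, the later terms of its sum only grow. *)
Lemma in_Dn_succ_low t i : Hi i < vL ->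
  (i \in D t.+1) = (0 < \sum_(k < t.+1)
     (((vH - Hi i) + (1 - sp) * (vL - Hi i)) * (s * #|D k|%:R) - (1 - sp) * (vL - Hi i) * mass)).
Proof.
move=> low; set a := (vH - Hi i) + _; set b := _ * _ * mass.
have a_gt0 : 0 < a by rewrite addr_gt0 ?mulr_gt0 ?subr_gt0 // (lt_trans low).
have gain_split (k : nat) : gain i (D k) = (a * (s * #|D k|%:R) - b) + a * (1 - s) * (i \in D k)%:R.
  by rewrite gainE simD_card /a /b; ring.
apply/idP/idP => [|pos]; last first.
  rewrite in_Dn_succ; apply: lt_le_trans pos _; apply: ler_sum => k _.
  by rewrite gain_split lerDl !mulr_ge0 ?ler0n ?subr_ge0 // ltW.
elim: t => [|t IH]; first by rewrite in_Dn_succ !big_ord1 gain_split Dn0 inE mulr0 addr0.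
case: (boolP (i \in D t.+1)) => [iD _|iD].
  apply: (@sumr_gt0_recr _ (fun k => a * (s * #|D k|%:R) - b) _ _ (IH iD)) => k kt.
  rewrite lerB // ler_wpM2l ?(ltW a_gt0) // ler_wpM2l ?(ltW s_gt0) //.
  by rewrite ler_nat subset_leq_card // Dn_sub // ltnW.
rewrite in_Dn_succ; congr (0 < _); apply: eq_bigr => k _.
rewrite gain_split; suff -> : (i \in D k) = false by rewrite mulr0 addr0.
by apply: contraNF iD; apply: subsetP; apply: Dn_sub; rewrite -ltnS.
Qed.

Definition exposure t : R := s * \sum_(k < t) #|D k|%:R.

Lemma in_Dn_low t i : (0 < t)%N -> Hi i < vL ->
  (i \in D t) = ((1 - sp) * (vL - Hi i) * (t%:R * mass - exposure t) < (vH - Hi i) * exposure t).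
Proof.
case: t => // t _ low; rewrite in_Dn_succ_low // sumrB -mulr_sumr -mulr_sumr.
rewrite sumr_const card_ord -[_ *+ t.+1]mulr_natl -[in RHS]subr_gt0 /exposure.
congr (0 < _); ring.
Qed.

Lemma exposureS t : exposure t.+1 = exposure t + s * #|D t|%:R.
Proof. by rewrite /exposure big_ord_recr mulrDr. Qed.

Lemma exposure2 : exposure 2 = s * #|[set i | vL < Hi i]|%:R.
Proof. by rewrite exposureS /exposure big_ord1 Dn0 Dn1 cards0 mulr0 add0r. Qed.

Lemma exposure_gt0 t : (2 <= t)%N -> 0 < exposure t.
Proof.
elim: t => [|t IH] //; rewrite leq_eqVlt => /orP[/eqP <-|/IH pos].
  have [i high] := high_exists.
  by rewrite exposure2 mulr_gt0 // ltr0n; apply/card_gt0P; exists i; rewrite inE.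
by rewrite exposureS (lt_le_trans pos) // lerDl mulr_ge0 ?ler0n // ltW.
Qed.

Definition cutoff t : R := (t%:R * mass - exposure t) / exposure t.

Lemma in_Dn_cutoff t i : (2 <= t)%N -> Hi i < vL -> (i \in D t) = (cutoff t < F (Hi i)).
Proof.
move=> t_ge2 low; have X_gt0 := exposure_gt0 t_ge2.
rewrite in_Dn_low ?(leq_trans _ t_ge2) // /cutoff /scrF ltr_pdivrMr // [in RHS]mulrAC.
by rewrite ltr_pdivlMr ?mulr_gt0 ?subr_gt0 //; congr (_ < _); ring.
Qed.

Lemma cutoffE t : (2 <= t)%N -> cutoff t = mass * (t%:R / exposure t) - 1.
Proof. by move=> /exposure_gt0 X_gt0; rewrite /cutoff; field; rewrite lt0r_neq0. Qed.

Lemma rate_le t0 t : (2 <= t0)%N -> (t0 <= t)%N -> t%:R / exposure t <= t0%:R / exposure t0.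
Proof.
move=> t0_ge2; elim: t => [|t IH]; first by rewrite leqn0 => /eqP <-.
rewrite leq_eqVlt => /orP[/eqP <- //|]; rewrite ltnS => t0_le.
apply: le_trans (IH t0_le); have t_ge2 := leq_trans t0_ge2 t0_le.
have X_gt0 := exposure_gt0 t_ge2; have XS_gt0 := exposure_gt0 (leqW t_ge2).
have X_le : exposure t <= s * (t%:R * #|D t|%:R).
  rewrite /exposure ler_pM2l //; apply: (@le_trans _ _ (\sum_(k < t) #|D t|%:R)).
    by apply: ler_sum => k _; rewrite ler_nat subset_leq_card // Dn_sub // ltnW.
  by rewrite sumr_const card_ord mulr_natl.
rewrite ler_pdivrMr // mulrAC ler_pdivlMr // exposureS -natr1; nra.
Qed.

Lemma cutoff_two : cutoff 2 = lambda1 N #|[set i | vL < Hi i]| s.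
Proof.
have n_gt0 : (0 : R) < #|[set i | vL < Hi i]|%:R.
  by have [i high] := high_exists; rewrite ltr0n; apply/card_gt0P; exists i; rewrite inE.
rewrite /cutoff exposure2 /lambda1 /mass natrM; field; rewrite !lt0r_neq0 //.
Qed.

Lemma Dn2_threshold x : x < vL -> F x = cutoff 2 -> D 2 = [set i | x < Hi i].
Proof.
move=> x_lt Fx; apply/setP => i; rewrite [in RHS]inE.
case: (Hi_lt_or_gt_vL i) => [low|high]; last by rewrite high_in_Dn // (lt_trans x_lt high).
by rewrite in_Dn_cutoff // -Fx scrF_lt_mono.
Qed.

Lemma Dn_full t : ~~ (1 / (1 - sp) < cutoff 2) -> (2 <= t)%N -> D t = [set: 'I_N].
Proof.
rewrite -leNgt => cut_le t_ge2; apply/setP => i; rewrite [in RHS]inE.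
case: (Hi_lt_or_gt_vL i) => [low|high]; last by rewrite high_in_Dn // (leq_trans _ t_ge2).
apply: (subsetP (Dn_sub t_ge2)); rewrite in_Dn_cutoff //.
exact: le_lt_trans cut_le (scrF_gt _ _ _).
Qed.
End Model.

Section Comparison.
Variables (vH sp vH' sp' : R).
Hypotheses (model : well_posed vH sp) (model' : well_posed vH' sp').

Let sp_lt1 : sp < 1. Proof. by case: model. Qed.
Let sp'_lt1 : sp' < 1. Proof. by case: model'. Qed.
Let vL_lt_vH' : vL < vH'. Proof. by case: model'. Qed.

Local Notation D := (Dn Hi s vL (fun=> vH) sp).
Local Notation D' := (Dn Hi s vL (fun=> vH') sp').
Local Notation F := (scrF vH sp vL).
Local Notation F' := (scrF vH' sp' vL).

Lemma Dn_eq_lt2 k : (k < 2)%N -> D' k = D k.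
Proof. by case: k => [|[|]] // _; rewrite (Dn1 model) (Dn1 model'). Qed.

Lemma exposure_le_of_subset t : (forall k, (k < t)%N -> D' k \subset D k) ->
  exposure vH' sp' t <= exposure vH sp t.
Proof.
move=> sub; rewrite ler_pM2l //; apply: ler_sum => k _.
by rewrite ler_nat subset_leq_card // sub.
Qed.

Lemma exposure_gap_le t0 t : (t0 <= t)%N ->
  (forall k, (t0 <= k)%N -> (k < t)%N -> D k \subset D' k) ->
  exposure vH sp t - exposure vH' sp' t <= exposure vH sp t0 - exposure vH' sp' t0.
Proof.
elim: t => [|t IH]; first by rewrite leqn0 => /eqP ->.
rewrite leq_eqVlt => /orP[/eqP -> //|]; rewrite ltnS => t0_le sub.
apply: le_trans (IH t0_le (fun k k_ge k_lt => sub k k_ge (ltnW k_lt))).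
have : s * #|D t|%:R <= s * #|D' t|%:R by rewrite ler_pM2l // ler_nat subset_leq_card // sub.
by rewrite !exposureS; lra.
Qed.

Lemma cutoff_le t : (2 <= t)%N -> exposure vH' sp' t <= exposure vH sp t ->
  cutoff vH sp t <= cutoff vH' sp' t.
Proof.
move=> t_ge2 X_le; rewrite (cutoffE model) // (cutoffE model') // lerD2r ler_pM2l ?mass_gt0 //.
rewrite ler_pM2l ?ltr0n ?(leq_trans _ t_ge2) //.
by rewrite lef_pV2 ?posrE ?(exposure_gt0 model) ?(exposure_gt0 model').
Qed.

Lemma cutoff_gap_le t0 t : (2 <= t0)%N -> (t0 <= t)%N ->
  (forall k, (k < t0)%N -> D' k \subset D k) ->
  (forall k, (t0 <= k)%N -> (k < t)%N -> D k \subset D' k) ->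
  cutoff vH' sp' t - cutoff vH sp t <= cutoff vH' sp' t0 - cutoff vH sp t0.
Proof.
move=> t0_ge2 t0_le before after; have t_ge2 := leq_trans t0_ge2 t0_le.
rewrite (cutoffE model) // (cutoffE model') // (cutoffE model) // (cutoffE model') //.
have gapE a b : mass * a - 1 - (mass * b - 1) = mass * (a - b) by ring.
rewrite !gapE ler_pM2l ?mass_gt0 //; apply: div_gap_le.
- by rewrite ltr0n (leq_trans _ t0_ge2).
- by rewrite ler_nat.
- exact: exposure_gt0 model _ t_ge2.
- exact: exposure_gt0 model' _ t_ge2.
- exact: exposure_gt0 model _ t0_ge2.
- exact: exposure_gt0 model' _ t0_ge2.
- exact: rate_le model _ _ t0_ge2 t0_le.
- exact: rate_le model' _ _ t0_ge2 t0_le.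
- exact: exposure_le_of_subset.
- exact: exposure_gap_le.
Qed.

Section Thresholds.
Variables (x y : R).
Hypotheses (x_lt_y : x < y) (y_lt_vL : y < vL) (Fy_Fx : F' y = F x).
Hypotheses (Dn2 : D 2 = [set i | x < Hi i]) (Dn2' : D' 2 = [set i | y < Hi i]).

Let x_lt_vL : x < vL. Proof. exact: lt_trans x_lt_y y_lt_vL. Qed.

Let advantage_x : 0 < (vH - x) * (1 - sp') - (vH' - x) * (1 - sp).
Proof. by rewrite -(@scrF_ltP _ vL) // -Fy_Fx scrF_lt. Qed.

Let advantage_shift H : (vH - H) * (1 - sp') - (vH' - H) * (1 - sp) =
  (vH - x) * (1 - sp') - (vH' - x) * (1 - sp) + (H - x) * (sp' - sp).
Proof. by ring. Qed.

Lemma scrF'_lt_scrF : sp' < sp -> forall H, H <= x -> F' H < F H.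
Proof.
move=> sp'_lt H H_le; rewrite scrF_ltP ?(le_lt_trans H_le) // advantage_shift.
by rewrite ltr_wpDr // mulr_le0 ?subr_le0 // ltW.
Qed.

Lemma scrF'_sub_scrF_decr : sp < sp' -> forall H1 H2, H1 < H2 -> H2 < vL ->
  F' H2 - F H2 < F' H1 - F H1.
Proof.
move=> sp_lt H1 H2; apply: scrF_sub_lt => //.
by rewrite advantage_shift ltr_wpDr // mulr_ge0 // subr_ge0 ltW.
Qed.

Lemma Dn'_sub_Dn : sp' < sp -> forall t, (2 <= t)%N -> D' t \subset D t.
Proof.
move=> sp'_lt t; elim/ltn_ind: t => t IH t_ge2.
have before k : (k < t)%N -> D' k \subset D k.
  by move=> k_lt; case: (ltnP k 2) => [/Dn_eq_lt2 ->|/IH]; [|apply].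
have cut_le := cutoff_le t_ge2 (exposure_le_of_subset before).
apply/subsetP => i; case: (Hi_lt_or_gt_vL model i) => [low|high _]; last first.
  by rewrite (high_in_Dn model) // (leq_trans _ t_ge2).
rewrite (in_Dn_cutoff model') // (in_Dn_cutoff model) // => cut'_lt.
case: (leP (F' (Hi i)) (F (Hi i))) => [F'_le|F_lt].
  by rewrite (le_lt_trans cut_le) ?(lt_le_trans cut'_lt).
rewrite -(in_Dn_cutoff model) //; apply: (subsetP (Dn_sub model t_ge2)).
rewrite Dn2 inE ltNge; apply: contraTN F_lt => H_le; rewrite -leNgt ltW //.
exact: scrF'_lt_scrF.
Qed.

Lemma Dn_sub_Dn'_from t0 : sp < sp' -> (2 <= t0)%N ->
  (forall k, (k < t0)%N -> D' k \subset D k) -> ~~ (D' t0 \subset D t0) ->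
  forall t, (t0 <= t)%N -> D t \subset D' t.
Proof.
move=> sp_lt t0_ge2 before /subsetPn[g gD' gD].
have g_low : Hi g < vL.
  case: (Hi_lt_or_gt_vL model g) => // high.
  by rewrite (high_in_Dn model) ?(leq_trans _ t0_ge2) in gD.
move: gD' gD; rewrite (in_Dn_cutoff model') // (in_Dn_cutoff model) // -leNgt => gD' gD.
elim/ltn_ind => t IH t0_le; have t_ge2 := leq_trans t0_ge2 t0_le.
apply/subsetP => i; case: (Hi_lt_or_gt_vL model i) => [low|high _]; last first.
  by rewrite (high_in_Dn model') // (leq_trans _ t_ge2).
case: (leP (Hi g) (Hi i)) => [g_le|i_lt] iD.
  apply: (subsetP (Dn_sub model' t0_le)); rewrite (in_Dn_cutoff model') //.
  by rewrite (lt_le_trans gD') // scrF_le_mono.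
move: iD; rewrite (in_Dn_cutoff model) // (in_Dn_cutoff model') // => cut_lt.
rewrite ltNge; apply/negP => F'_le.
(* [F' - F] is larger at [Hi i] than at [Hi g], where it already exceeds the cutoff gap at
   [t0]; since [D] stays inside [D'] on [t0, t), the gap at [t] is no larger. *)
have gap := cutoff_gap_le t0_ge2 t0_le before (fun k k_ge k_lt => IH k k_lt k_ge).
have := scrF'_sub_scrF_decr sp_lt i_lt g_low; lra.
Qed.

Lemma Dn_comparison_sp_lt : sp < sp' ->
  (forall t, (2 <= t)%N -> D' t \subset D t) \/
  (exists tt, (2 <= tt)%N /\
     (forall t, (2 <= t)%N -> (t <= tt)%N -> D' t \subset D t) /\
     (forall t, (tt < t)%N -> D t \subset D' t)).
Proof.
move=> sp_lt.
case: (classic (exists t, (2 <= t)%N && ~~ (D' t \subset D t))) => [bad|none]; last first.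
  left => t t_ge2; apply/negPn/negP => not_sub; apply: none.
  by exists t; rewrite t_ge2.
right; case: (ex_minnP bad) => t0 /andP[t0_ge2 not_sub] t0_min.
have before k : (k < t0)%N -> D' k \subset D k.
  move=> k_lt; case: (ltnP k 2) => [/Dn_eq_lt2 -> //|k_ge2].
  by apply/negPn/negP => k_bad; have := t0_min k; rewrite k_ge2 k_bad leqNgt k_lt => /(_ isT).
have t0_gt2 : (2 < t0)%N.
  rewrite ltn_neqAle t0_ge2 andbT; apply: contraNneq not_sub => <-.
  by rewrite Dn2 Dn2'; apply/subsetP => i; rewrite !inE; apply: lt_trans.
exists t0.-1; split; first by rewrite -ltnS (ltn_predK t0_gt2).
split=> [t _ t_le|t]; first by apply: before; rewrite -(ltn_predK t0_gt2) ltnS.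
by rewrite (ltn_predK t0_gt2); apply: Dn_sub_Dn'_from.
Qed.
End Thresholds.

Lemma Dn_comparison (h2 h2' : option R) :
  is_lowerH2 (lambda1 N #|[set i | vL < Hi i]| s) vH sp vL h2 ->
  is_lowerH2 (lambda1 N #|[set i | vL < Hi i]| s) vH' sp' vL h2' ->
  thr_lt h2 h2' ->
  (sp' < sp -> forall t, (2 <= t)%N -> D' t \subset D t) /\
  (sp < sp' ->
     (forall t, (2 <= t)%N -> D' t \subset D t) \/
     (exists tt, (2 <= tt)%N /\
        (forall t, (2 <= t)%N -> (t <= tt)%N -> D' t \subset D t) /\
        (forall t, (tt < t)%N -> D t \subset D' t))).
Proof.
have cut2 : cutoff vH' sp' 2 = cutoff vH sp 2 by rewrite (cutoff_two model) (cutoff_two model').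
rewrite /is_lowerH2 -(cutoff_two model).
case: ifP => [_ [x [-> [x_lt Fx]]]|/negbT full _ _ _]; last first.
  have sub t : (2 <= t)%N -> D' t \subset D t by move=> t_ge2; rewrite (Dn_full model) ?subsetT.
  by split=> _ //; left.
case: ifP => [_ [y [-> [y_lt Fy]]]|_ ->] //= x_lt_y.
have Fy_Fx : F' y = F x by rewrite Fx Fy.
have Dn2 := Dn2_threshold model x_lt Fx.
have Dn2' : D' 2 = [set i | y < Hi i] by rewrite (Dn2_threshold model' y_lt) // cut2.
split; first exact: Dn'_sub_Dn x_lt_y y_lt Fy_Fx Dn2.
exact: Dn_comparison_sp_lt x_lt_y y_lt Fy_Fx Dn2 Dn2'.
Qed.
End Comparison.
End Diffusion.

Theorem proposition3 (R : realFieldType) (N G : nat)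
    (grp : 'I_N -> nat) (Hg : nat -> R) (vL s vH vH' sp sp' : R)
    (h2 h2' : option R) :
    (2 <= N)%N -> (2 <= G)%N ->
    (* groups 0..G-1, each nonempty; group 0 is N_1, group 1 is N_2 *)
    (forall i, (grp i < G)%N) ->
    (forall k, (k < G)%N -> exists i, grp i = k) ->
    (forall k l, (k < l)%N -> (l < G)%N -> Hg l < Hg k) ->
    Hg 1%N < vL -> vL < Hg 0%N ->
    0 < s -> s <= 1 ->
    0 < sp -> sp < 1 -> 0 < sp' -> sp' < 1 ->
    Hg 0%N <= vH -> Hg 0%N <= vH' ->
    (vH' - vH) * (sp' - sp) < 0 ->
    let Hi := fun i => Hg (grp i) in
    let N1 := #|[set i | grp i == 0%N]| in
    let lam := lambda1 N N1 s in
    is_lowerH2 lam vH sp vL h2 ->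
    is_lowerH2 lam vH' sp' vL h2' ->
    thr_lt h2 h2' ->
    let D := Dn Hi s vL (fun _ => vH) sp in
    let D' := Dn Hi s vL (fun _ => vH') sp' in
    (sp' < sp -> forall t, (2 <= t)%N -> D' t \subset D t) /\
    (sp < sp' ->
       (forall t, (2 <= t)%N -> D' t \subset D t) \/
       (exists tt, (2 <= tt)%N /\
          (forall t, (2 <= t)%N -> (t <= tt)%N -> D' t \subset D t) /\
          (forall t, (tt < t)%N -> D t \subset D' t))).
Proof.
move=> _ G_ge2 grp_lt grp_onto Hg_decr Hg1_lt Hg0_gt s_gt0 s_le1 _ sp_lt1 _ sp'_lt1 vH_ge vH'_ge _
  Hi N1 lam h2P h2P' h2_lt D D'.
have low i : grp i != 0%N -> Hi i < vL.
  rewrite /Hi -lt0n leq_eqVlt => /orP[/eqP <- //|grp_gt1].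
  exact: lt_trans (Hg_decr _ _ grp_gt1 (grp_lt i)) Hg1_lt.
have high_iff i : (vL < Hi i) = (grp i == 0%N).
  case: eqP => [g0|/eqP/low/ltW]; first by rewrite /Hi g0.
  by rewrite leNgt => /negbTE.
have high_exists : exists i, vL < Hi i.
  by have [i g0] := grp_onto 0%N (leq_trans (ltn0Sn 1) G_ge2); exists i; rewrite high_iff g0.
have model v p : p < 1 -> Hg 0%N <= v -> well_posed Hi vL v p.
  move=> p_lt1 v_ge; split=> //; first exact: lt_le_trans v_ge.
  move=> i; case: (eqVneq (grp i) 0%N) => [g0|/low]; last by left.
  by right; rewrite /Hi g0 Hg0_gt.
have N1E : N1 = #|[set i | vL < Hi i]| by apply: eq_card => i; rewrite !inE high_iff.
rewrite /lam N1E in h2P h2P'.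
exact (Dn_comparison s_gt0 s_le1 high_exists (model _ _ sp_lt1 vH_ge) (model _ _ sp'_lt1 vH'_ge)
  h2P h2P' h2_lt).
Qed.
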